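(* Let $\mathscr H$ be a Hilbert module over $A=M_d(\mathbb C)$. There exist vectors $g,h\in\mathscr H$ with $[g,h]=I$ if and only if the modular dimension of $\mathscr H$ is at least $d$.
   Context: A Hilbert module over $A=M_d(\mathbb C)$ is a left $A$-module $\mathscr H$ with a map $[\cdot,\cdot]:\mathscr H\times\mathscr H\to A$ such that for all $f,g,h\in\mathscr H$, $a\in A$: $[f+g,h]=[f,h]+[g,h]$; $[af,g]=a[f,g]$; $[g,f]=[f,g]^*$; $[f,f]\ge0$, and $[f,f]=0$ iff $f=0$; and $\mathscr H$ is complete in the norm $f\mapsto\|[f,f]\|^{1/2}$. A family $\{f_\alpha\}\subset\mathscr H$ is modular orthonormal if $[f_\alpha,f_\beta]=0$ for $\alpha\ne\beta$ and each $[f_\alpha,f_\alpha]$ is a minimal (rank-one) projection in $A$. A modular base is a maximal modular orthonormal family; all modular bases of $\mathscr H$ have the same cardinality, called the modular dimension of $\mathscr H$. $I$ denotes the $d\times d$ identity matrix. *)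

From HB Require Import structures.
From mathcomp Require Import all_boot all_order all_algebra.
From mathcomp Require Import complex.
From mathcomp Require Import classical_sets boolp reals.
Set Implicit Arguments. Unset Strict Implicit. Unset Printing Implicit Defensive.
Import Order.TTheory GRing.Theory Num.Theory.
Local Open Scope ring_scope.
Local Open Scope classical_set_scope.

Section HilbertModule.
Variables (R : realType) (d : nat).
Local Notation C := (R[i]).
Local Notation Md := ('M[C]_d).

Definition adjmx (A : Md) : Md := \matrix_(i, j) (A j i)^*.
Definition adjcv (v : 'cV[C]_d) : 'rV[C]_d := \row_j (v j 0)^*.

Definition psd (A : Md) : Prop :=
  adjmx A = A /\ forall v : 'cV[C]_d, 0 <= (adjcv v *m A *m v) 0 0.

Definition vnorm (v : 'cV[C]_d) : R :=
  Num.sqrt (\sum_i ((complex.Re (v i 0)) ^+ 2 + (complex.Im (v i 0)) ^+ 2)).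

Definition opnorm (A : Md) : R :=
  sup [set r : R | exists v : 'cV[C]_d, vnorm v <= 1 /\ r = vnorm (A *m v)].

Definition minimal_projection (P : Md) : Prop :=
  P *m P = P /\ adjmx P = P /\ \rank P = 1%N.

Variable (H : lmodType Md).

Definition hm_norm (ip : H -> H -> Md) (f : H) : R := Num.sqrt (opnorm (ip f f)).

Definition hm_complete (ip : H -> H -> Md) : Prop :=
  forall u : nat -> H,
    (forall e : R, 0 < e -> exists N, forall m n, (N <= m)%N -> (N <= n)%N ->
        hm_norm ip (u m - u n) < e) ->
    exists f : H, forall e : R, 0 < e -> exists N, forall n, (N <= n)%N ->
        hm_norm ip (u n - f) < e.

Definition is_hilbert_module (ip : H -> H -> Md) : Prop :=
  [/\ forall f g h, ip (f + g) h = ip f h + ip g h,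
      forall (a : Md) f g, ip (a *: f) g = a *m ip f g,
      forall f g, ip g f = adjmx (ip f g),
      forall f, psd (ip f f) /\ (ip f f = 0 <-> f = 0)
    & hm_complete ip].

Definition modular_orthonormal (ip : H -> H -> Md) (B : set H) : Prop :=
  (forall f g, B f -> B g -> f <> g -> ip f g = 0) /\
  (forall f, B f -> minimal_projection (ip f f)).

Definition modular_base (ip : H -> H -> Md) (B : set H) : Prop :=
  modular_orthonormal ip B /\
  forall B' : set H, modular_orthonormal ip B' -> B `<=` B' -> B' = B.

(* the modular dimension is at least n: a (equivalently, every) modular base
   has at least n elements *)
Definition modular_dim_ge (ip : H -> H -> Md) (n : nat) : Prop :=
  exists B : set H, modular_base ip B /\
    exists s : 'I_n -> H, injective s /\ forall i, B (s i).

End HilbertModule.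

From HB Require Import structures.
From mathcomp Require Import all_boot all_order all_algebra.
From mathcomp Require Import complex.
From mathcomp Require Import classical_sets boolp reals.
Set Implicit Arguments. Unset Strict Implicit. Unset Printing Implicit Defensive.
Import Order.TTheory GRing.Theory Num.Theory.
Local Open Scope ring_scope.

(** If [g, h] = I, diagonalise [g, g] = U^* D U with U unitary.  Each
    eigenvalue D_k is >= 0 by positivity, and nonzero because [g, h] = I
    makes a |-> a g injective; hence g' := D^(-1/2) U g satisfies [g', g'] = I,
    and the vectors E_kk g' are modular orthonormal, so by Zorn they extend to
    a modular base with at least d elements.  Conversely, every minimal
    projection is unitarily conjugate to any matrix unit E_ii; choosing a_i
    with a_i [f_i, f_i] a_i^* = E_ii for d distinct base vectors f_i, the
    vector g := \sum a_i f_i has [g, g] = \sum E_ii = I. *)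

Section Adjoint.
Variable C : numClosedFieldType.

Definition adj n (A : 'M[C]_n) : 'M[C]_n := \matrix_(i, j) (A j i)^*.

Lemma adjE n (A : 'M[C]_n) : adj A = map_mx Num.conj A^T.
Proof. by apply/matrixP => i j; rewrite !mxE. Qed.

Lemma adjM n (A B : 'M[C]_n) : adj (A *m B) = adj B *m adj A.
Proof. by rewrite !adjE trmx_mul map_mxM. Qed.

Lemma adjD n (A B : 'M[C]_n) : adj (A + B) = adj A + adj B.
Proof. by apply/matrixP => i j; rewrite !mxE rmorphD. Qed.

Lemma adj0 n : adj (0 : 'M[C]_n) = 0.
Proof. by apply/matrixP => i j; rewrite !mxE conjC0. Qed.

Lemma adj_delta n (i j : 'I_n) : adj (delta_mx i j) = delta_mx j i.
Proof.
apply/matrixP => a b; rewrite !mxE.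
by case: (a == j); case: (b == i); rewrite /= ?conjC1 ?conjC0.
Qed.

Lemma adj_diag n (D : 'rV[C]_n) : adj (diag_mx D) = diag_mx (map_mx Num.conj D).
Proof.
apply/matrixP => a b; rewrite !mxE; case: (eqVneq a b) => [->|_].
  by rewrite !mulr1n.
by rewrite !mulr0n conjC0.
Qed.

Lemma hermitian_unitary_diag n (A : 'M[C]_n) : adj A = A ->
  exists (U : 'M[C]_n) (D : 'rV[C]_n),
    [/\ U *m adj U = 1%:M, adj U *m U = 1%:M & U *m A *m adj U = diag_mx D].
Proof.
move=> hA; have An : A \is normalmx by apply/normalmxP; rewrite -adjE hA.
have /orthomx_spectralP Aeq := An.
set P := spectralmx A in Aeq; set D := spectral_diag A in Aeq.
have Pu : P \is unitarymx by exact: spectral_unitarymx.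
have PP : P *m adj P = 1%:M by rewrite adjE; apply/unitarymxP.
have iP : invmx P = adj P by rewrite adjE invmx_unitary.
exists P, D; split => //; first by rewrite -iP mulVmx ?unitarymx_unit.
by rewrite Aeq iP !mulmxA PP mul1mx -mulmxA PP mulmx1.
Qed.

Lemma diag_sandwich_delta n (D : 'rV[C]_n) (i k j : 'I_n) :
  delta_mx i k *m diag_mx D *m delta_mx k j = D 0 k *: delta_mx i j.
Proof.
rewrite -mulmxA.
have -> : diag_mx D *m delta_mx k j = D 0 k *: (delta_mx k j : 'M[C]_n).
  apply/matrixP => a b; rewrite mul_diag_mx !mxE.
  by case: (eqVneq a k) => [->|_]; rewrite ?mulr0 ?mulr1.
by rewrite -scalemxAr mul_delta_mx.
Qed.

Lemma conj_delta_diag n (U A : 'M[C]_n) (D : 'rV[C]_n) (i k : 'I_n) :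
  U *m A *m adj U = diag_mx D ->
  (delta_mx i k *m U) *m A *m adj (delta_mx i k *m U) = D 0 k *: delta_mx i i.
Proof.
move=> UAU.
by rewrite adjM adj_delta !mulmxA -(mulmxA _ U) -(mulmxA _ _ (adj U)) UAU
  diag_sandwich_delta.
Qed.

End Adjoint.

Section HilbertModule.
Variables (R : realType) (d : nat).
Local Notation C := R[i].

Lemma psd_scale_delta (c : C) (k : 'I_d) : psd (c *: delta_mx k k) -> 0 <= c.
Proof.
move=> [_ /(_ (delta_mx k 0))].
have -> : adjcv (delta_mx k 0 : 'cV[C]_d) = delta_mx 0 k.
  by apply/rowP => j; rewrite !mxE; case: (j == k); rewrite ?conjC1 ?conjC0.
by rewrite -scalemxAr mul_delta_mx -scalemxAl mul_delta_mx !mxE !eqxx mulr1.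
Qed.

Lemma minimal_projection_conj_delta (P : 'M[C]_d) (i : 'I_d) :
  minimal_projection P -> exists a : 'M[C]_d, a *m P *m adj a = delta_mx i i.
Proof.
move=> [PP [aP rP]].
have [U [D [_ UU' UPU]]] := hermitian_unitary_diag aP.
have DD : diag_mx D *m diag_mx D = diag_mx D.
  by rewrite -UPU -!mulmxA (mulmxA (adj U)) UU' mul1mx (mulmxA P) PP.
have [k Dk] : exists k, D 0 k != 0.
  apply/existsP; apply: contraT => /existsPn D0; move: rP.
  have -> : P = adj U *m diag_mx D *m U.
    by rewrite -UPU !mulmxA UU' mul1mx -mulmxA UU' mulmx1.
  have -> : diag_mx D = 0.
    by apply/matrixP => a b; rewrite !mxE (eqP (negPn (D0 a))) mul0rn.
  by rewrite mulmx0 mul0mx mxrank0.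
have Dk1 : D 0 k = 1.
  move/matrixP: DD => /(_ k k); rewrite mulmx_diag !mxE eqxx !mulr1n.
  by move=> e; apply: (mulIf Dk); rewrite mul1r.
by exists (delta_mx i k *m U); rewrite (conj_delta_diag _ _ UPU) Dk1 scale1r.
Qed.

Variables (H : lmodType 'M[C]_d) (ip : H -> H -> 'M[C]_d).
Hypothesis hH : is_hilbert_module ip.

Lemma ipDl f g h : ip (f + g) h = ip f h + ip g h.
Proof. by case: hH. Qed.

Lemma ipZl a f g : ip (a *: f) g = a *m ip f g.
Proof. by case: hH. Qed.

Lemma ipC f g : ip g f = adj (ip f g).
Proof. by case: hH. Qed.

Lemma ip_psd f : psd (ip f f).
Proof. by case: hH => _ _ _ /(_ f) []. Qed.

Lemma ip_eq0 f : ip f f = 0 -> f = 0.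
Proof. by case: hH => _ _ _ /(_ f) [_ []]. Qed.

Lemma ip0l g : ip 0 g = 0.
Proof. by rewrite -(scale0r (0 : H)) ipZl mul0mx. Qed.

Lemma ipDr f g h : ip f (g + h) = ip f g + ip f h.
Proof. by rewrite ipC ipDl adjD -!ipC. Qed.

Lemma ip0r f : ip f 0 = 0.
Proof. by rewrite ipC ip0l adj0. Qed.

Lemma ipZZ a f b g : ip (a *: f) (b *: g) = a *m ip f g *m adj b.
Proof. by rewrite ipC ipZl adjM -ipC ipZl. Qed.

Lemma ip_suml (I : finType) (x : I -> H) y : ip (\sum_i x i) y = \sum_i ip (x i) y.
Proof. by elim/big_rec2: _ => [|i a b _ <-]; rewrite ?ip0l ?ipDl. Qed.

Lemma ip_sumr (I : finType) (x : I -> H) y : ip y (\sum_i x i) = \sum_i ip y (x i).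
Proof. by elim/big_rec2: _ => [|i a b _ <-]; rewrite ?ip0r ?ipDr. Qed.

Lemma ip_eq1_scaler_eq0 g h a : ip g h = 1%:M -> a *: g = 0 -> a = 0.
Proof. by move=> gh ag0; rewrite -(mulmx1 a) -gh -ipZl ag0 ip0l. Qed.

Lemma ip_eq1_eigen_gt0 g h (U : 'M[C]_d) (D : 'rV[C]_d) :
  ip g h = 1%:M -> U *m adj U = 1%:M -> U *m ip g g *m adj U = diag_mx D ->
  forall k, 0 < D 0 k.
Proof.
move=> gh UU UGU k; pose a := delta_mx k k *m U.
have ia : ip (a *: g) (a *: g) = D 0 k *: delta_mx k k.
  by rewrite ipZZ (conj_delta_diag _ _ UGU).
have D_ge0 : 0 <= D 0 k.
  by have := ip_psd (a *: g); rewrite ia => /psd_scale_delta.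
rewrite lt_def D_ge0 andbT; apply/eqP => D0.
have a0 : a = 0.
  by apply: (ip_eq1_scaler_eq0 gh); apply: ip_eq0; rewrite ia D0 scale0r.
have : delta_mx k k = 0 :> 'M[C]_d.
  by rewrite -(mulmx1 (delta_mx k k)) -UU mulmxA -/a a0 mul0mx.
by move/matrixP/(_ k k); rewrite !mxE !eqxx => /eqP; rewrite oner_eq0.
Qed.

Lemma ip_eq1_normalize g h : ip g h = 1%:M -> exists g', ip g' g' = 1%:M.
Proof.
move=> gh; have hG : adj (ip g g) = ip g g by rewrite -ipC.
have [U [D [UU _ UGU]]] := hermitian_unitary_diag hG.
have D_gt0 := ip_eq1_eigen_gt0 gh UU UGU.
exists ((diag_mx (\row_k (sqrtC (D 0 k))^-1) *m U) *: g).
rewrite ipZZ adjM adj_diag !mulmxA -(mulmxA _ U) -(mulmxA _ _ (adj U)) UGU.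
rewrite !mulmx_diag; apply/matrixP => a b; rewrite !mxE.
case: (eqVneq a b) => [->|_]; rewrite ?mulr0n // !mulr1n.
have sqrt_gt0 : 0 < sqrtC (D 0 b) by rewrite sqrtC_gt0.
rewrite geC0_conj ?invr_ge0 ?ltW // mulrAC -invfM -expr2 sqrtCK mulVf //.
by rewrite gt_eqF.
Qed.

Local Open Scope classical_set_scope.

Lemma modular_orthonormal_chain (F : set H) (Fam : set (set H)) :
  modular_orthonormal ip F ->
  (forall X, Fam X -> modular_orthonormal ip (F `|` X)) ->
  total_on Fam subset ->
  modular_orthonormal ip (F `|` \bigcup_(X in Fam) X).
Proof.
move=> [oF mF] oFX tot; split; last first.
  by move=> f [Ff|[X FX Xf]]; [exact: mF | apply: (oFX X FX).2; right].
have in_one X Y f g : Fam X -> Fam Y -> (F `|` X) f -> (F `|` Y) g ->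
    exists Z, Fam Z /\ (F `|` Z) f /\ (F `|` Z) g.
  move=> FX FY Xf Yg; have [XY|YX] := tot X Y FX FY.
    by exists Y; split=> //; split=> //; case: Xf => [?|/XY ?]; [left|right].
  by exists X; split=> //; split=> //; case: Yg => [?|/YX ?]; [left|right].
move=> f g [Ff|[X FX Xf]] [Fg|[Y FY Yg]]; first exact: oF.
- by have [Z [FZ [Zf Zg]]] := in_one Y Y f g FY FY (or_introl Ff) (or_intror Yg);
    apply: (oFX Z FZ).1.
- by have [Z [FZ [Zf Zg]]] := in_one X X f g FX FX (or_intror Xf) (or_introl Fg);
    apply: (oFX Z FZ).1.
- by have [Z [FZ [Zf Zg]]] := in_one X Y f g FX FY (or_intror Xf) (or_intror Yg);
    apply: (oFX Z FZ).1.
Qed.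

Lemma modular_orthonormal_extend (F : set H) : modular_orthonormal ip F ->
  exists B, modular_base ip B /\ F `<=` B.
Proof.
move=> oF.
have [A [oFA maxA]] :=
  @Zorn_bigcup _ (fun X => modular_orthonormal ip (F `|` X))
    (fun Fam FamP tot => modular_orthonormal_chain oF FamP tot).
exists (F `|` A); split; last exact: subsetUl.
split=> // B' oB' FAB'.
have FB'E : F `|` B' = B'.
  by apply/seteqP; split=> x; [case=> // Fx; apply: FAB'; left | right].
have AB' : A `<=` B' by move=> x Ax; apply: FAB'; right.
have AB'E : A = B'.
  apply: contrapT => AB'_neq; apply: (maxA B'); last by rewrite FB'E.
  by rewrite properEneq; split=> //; apply/eqP.
by rewrite -{1}FB'E AB'E.
Qed.

Lemma delta_frame_orthonormal g : ip g g = 1%:M ->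
  let f k := delta_mx k k *: g in
  [/\ injective f & modular_orthonormal ip (range f)].
Proof.
move=> g1 f; have ipf j k : ip (f j) (f k) = delta_mx j j *m delta_mx k k.
  by rewrite ipZZ g1 mulmx1 adj_delta.
split.
  move=> j k fjk; have := ipf j k; rewrite -fjk ipf !mul_delta_mx mul_delta_mx_cond.
  case: (eqVneq j k) => // _; rewrite mulr0n => /matrixP/(_ j j).
  by rewrite !mxE !eqxx => /eqP; rewrite oner_eq0.
split=> [_ _ [j _ <-] [k _ <-] fjk|_ [k _ <-]].
  by rewrite ipf mul_delta_mx_0 //; apply/eqP => jk; apply: fjk; rewrite jk.
rewrite ipf mul_delta_mx; split; first exact: mul_delta_mx.
by split; [exact: adj_delta | exact: mxrank_delta].
Qed.

Lemma ip_eq1_modular_dim g : ip g g = 1%:M -> modular_dim_ge ip d.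
Proof.
move=> /delta_frame_orthonormal [f_inj of_].
have [B [baseB fB]] := modular_orthonormal_extend of_.
by exists B; split=> //; exists (fun k => delta_mx k k *: g); split=> // k;
  apply: fB; exists k.
Qed.

Lemma modular_dim_ip_eq1 : modular_dim_ge ip d -> exists g, ip g g = 1%:M.
Proof.
move=> [B [[[oB mB] _] [s [s_inj sB]]]].
have [a ha] := boolp.choice (fun i : 'I_d =>
  minimal_projection_conj_delta i (mB _ (sB i))).
exists (\sum_i a i *: s i); rewrite ip_suml mx1_sum_delta; apply: eq_bigr => i _.
rewrite ip_sumr (bigD1 i) //= big1 ?addr0; first by rewrite ipZZ ha.
move=> j ji; rewrite ipZZ oB ?mulmx0 ?mul0mx //.
by move=> /s_inj ji'; rewrite ji' eqxx in ji.
Qed.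

End HilbertModule.

Theorem mainTheorem7 (R : realType) (d : nat) (H : lmodType 'M[R[i]]_d)
  (ip : H -> H -> 'M[R[i]]_d) (hH : is_hilbert_module ip) :
  (exists g h : H, ip g h = 1%:M) <-> modular_dim_ge ip d.
Proof.
split.
  move=> [g [h /(ip_eq1_normalize hH)] [g' g'1]].
  exact: ip_eq1_modular_dim hH _ g'1.
move=> /(modular_dim_ip_eq1 hH) [g g1].
by exists g, g.
Qed.
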